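(* For all $m\ge2$, $n\ge1$, $\mathrm{int}(CP_{m,n})\subseteq SCP_{m,n}\cap N^+_{m,n}$, where the interior is taken in $\mathbb{S}_{m,n}$.
   Context: $\mathbb{S}_{m,n}$ is the (finite-dimensional) space of symmetric real $m$th order $n$-dimensional tensors with its Euclidean topology. $(u^m)_{i_1\ldots i_m}=u_{i_1}\cdots u_{i_m}$. $CP_{m,n}$ is the set of $\mathcal{A}=\sum_{k=1}^r(u^{(k)})^m$ with $u^{(k)}\in\mathbb{R}^n_+$; $SCP_{m,n}$ is the set of such $\mathcal{A}$ admitting a decomposition with $\mathrm{span}\{u^{(1)},\dots,u^{(r)}\}=\mathbb{R}^n$. $N^+_{m,n}$ is the set of tensors all of whose entries are positive. *)

From Stdlib Require Import Reals Lra List Permutation.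
Import ListNotations.
Open Scope R_scope.

(* A real m-th order n-dimensional tensor is modelled as a function from
   index lists to R; only "valid" index lists (length m, entries < n) matter. *)
Definition tensor := list nat -> R.

Definition valid_idx (m n : nat) (l : list nat) : Prop :=
  length l = m /\ Forall (fun i => (i < n)%nat) l.

Definition symmetric_tensor (m n : nat) (A : tensor) : Prop :=
  forall l l', valid_idx m n l -> Permutation l l' -> A l = A l'.

(* vectors of R^n : nat -> R, coordinates 0..n-1 *)
Definition nonneg_vec (n : nat) (u : nat -> R) : Prop :=
  forall i, (i < n)%nat -> 0 <= u i.

Definition pow_tensor (u : nat -> R) : tensor :=
  fun l => fold_right (fun i acc => u i * acc) 1 l.

Definition sumR (xs : list R) : R := fold_right Rplus 0 xs.

Definition decomp (m n : nat) (A : tensor) (us : list (nat -> R)) : Prop :=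
  Forall (nonneg_vec n) us /\
  forall l, valid_idx m n l -> A l = sumR (map (fun u => pow_tensor u l) us).

Definition CP_tensor (m n : nat) (A : tensor) : Prop :=
  symmetric_tensor m n A /\ exists us, decomp m n A us.

Definition spans_Rn (n : nat) (us : list (nat -> R)) : Prop :=
  forall v : nat -> R, exists c : nat -> R, forall i, (i < n)%nat ->
    v i = sumR (map (fun k => c k * (nth k us (fun _ => 0)) i)
                    (seq 0 (length us))).

Definition SCP_tensor (m n : nat) (A : tensor) : Prop :=
  symmetric_tensor m n A /\ exists us, decomp m n A us /\ spans_Rn n us.

Definition Nplus_tensor (m n : nat) (A : tensor) : Prop :=
  forall l, valid_idx m n l -> 0 < A l.

(* Interior of CP_{m,n} in S_{m,n}, with the (equivalent, finite-dimensional)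
   sup-norm topology on entries. *)
Definition interior_CP (m n : nat) (A : tensor) : Prop :=
  symmetric_tensor m n A /\
  exists eps, 0 < eps /\
    forall B, symmetric_tensor m n B ->
      (forall l, valid_idx m n l -> Rabs (B l - A l) < eps) -> CP_tensor m n B.

(** A tensor in the interior of [CP_{m,n}] stays completely positive after
    subtracting any small symmetric tensor.  Subtracting the constant tensor
    [eps/2] shows that every entry is at least [eps/2].  Subtracting
    [sum_i (c e_i)^m] for a small [c > 0], whose entries lie in [[0, c]],
    gives a decomposition of [A] that contains the scaled unit vectors
    [c e_1, ..., c e_n], which span [R^n]. *)

From Stdlib Require Import Reals Lra Lia List Permutation.
Import ListNotations.
Open Scope R_scope.

Lemma sumR_app (xs ys : list R) : sumR (xs ++ ys) = sumR xs + sumR ys.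
Proof. induction xs as [|x xs IH]; simpl; [ring | rewrite IH; ring]. Qed.

Lemma sumR_map_le {T : Type} (f g : T -> R) (l : list T) :
  (forall x, In x l -> f x <= g x) -> sumR (map f l) <= sumR (map g l).
Proof.
  induction l as [|a l IH]; simpl; intros Hfg; [lra|].
  assert (f a <= g a) by auto.
  assert (sumR (map f l) <= sumR (map g l)) by auto.
  lra.
Qed.

Lemma sumR_map_zero {T : Type} (f : T -> R) (l : list T) :
  (forall x, In x l -> f x = 0) -> sumR (map f l) = 0.
Proof.
  induction l as [|a l IH]; simpl; intros Hf; [reflexivity|].
  rewrite Hf, IH by auto; ring.
Qed.

Lemma sumR_delta (f : nat -> R) (j a len : nat) :
  sumR (map (fun k => if Nat.eqb k j then f k else 0) (seq a len)) =
  if andb (a <=? j) (j <? a + len) then f j else 0.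
Proof.
  revert a; induction len as [|len IH]; intros a; simpl.
  - case (Nat.leb_spec a j); case (Nat.ltb_spec j (a + 0)); simpl;
      intros; try lia; reflexivity.
  - rewrite IH.
    case (Nat.eqb_spec a j) as [<-|Haj].
    + case (Nat.leb_spec (S a) a); case (Nat.leb_spec a a);
        case (Nat.ltb_spec a (a + S len)); simpl; intros; try lia; ring.
    + case (Nat.leb_spec (S a) j); case (Nat.ltb_spec j (S a + len));
        case (Nat.leb_spec a j); case (Nat.ltb_spec j (a + S len)); simpl;
        intros; try lia; ring.
Qed.

Lemma pow_tensor_cons (u : nat -> R) (i : nat) (l : list nat) :
  pow_tensor u (i :: l) = u i * pow_tensor u l.
Proof. reflexivity. Qed.

Lemma pow_tensor_perm (u : nat -> R) (l l' : list nat) :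
  Permutation l l' -> pow_tensor u l = pow_tensor u l'.
Proof. induction 1; rewrite ?pow_tensor_cons; congruence || ring. Qed.

Lemma pow_tensor_nonneg (n : nat) (u : nat -> R) (l : list nat) :
  nonneg_vec n u -> Forall (fun i => (i < n)%nat) l -> 0 <= pow_tensor u l.
Proof.
  intros Hu; induction 1; rewrite ?pow_tensor_cons; [unfold pow_tensor; simpl; lra|].
  apply Rmult_le_pos; auto.
Qed.

Lemma pow_tensor_unit_interval (u : nat -> R) (l : list nat) :
  (forall j, 0 <= u j <= 1) -> 0 <= pow_tensor u l <= 1.
Proof.
  intros Hu; induction l as [|i l IH]; [unfold pow_tensor; simpl; lra|].
  rewrite pow_tensor_cons; destruct (Hu i); nra.
Qed.

Definition sum_pow_tensor (us : list (nat -> R)) : tensor :=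
  fun l => sumR (map (fun u => pow_tensor u l) us).

Lemma sum_pow_tensor_app (us vs : list (nat -> R)) (l : list nat) :
  sum_pow_tensor (us ++ vs) l = sum_pow_tensor us l + sum_pow_tensor vs l.
Proof. unfold sum_pow_tensor; rewrite map_app; apply sumR_app. Qed.

Lemma sum_pow_tensor_nonneg (n : nat) (us : list (nat -> R)) (l : list nat) :
  Forall (nonneg_vec n) us -> Forall (fun i => (i < n)%nat) l ->
  0 <= sum_pow_tensor us l.
Proof.
  intros Hus Hl; induction Hus as [|u us Hu _ IH]; unfold sum_pow_tensor in *;
    simpl; [lra|].
  pose proof (pow_tensor_nonneg n u l Hu Hl); lra.
Qed.

Lemma sum_pow_tensor_symmetric (m n : nat) (us : list (nat -> R)) :
  symmetric_tensor m n (sum_pow_tensor us).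
Proof.
  intros l l' _ Hperm; unfold sum_pow_tensor.
  f_equal; apply map_ext; intros u; apply pow_tensor_perm, Hperm.
Qed.

Lemma symmetric_tensor_sub (m n : nat) (A B : tensor) :
  symmetric_tensor m n A -> symmetric_tensor m n B ->
  symmetric_tensor m n (fun l => A l - B l).
Proof. intros HA HB l l' Hl Hperm; rewrite (HA l l'), (HB l l') by assumption; ring. Qed.

Lemma CP_tensor_nonneg (m n : nat) (A : tensor) (l : list nat) :
  CP_tensor m n A -> valid_idx m n l -> 0 <= A l.
Proof.
  intros [_ [us [Hus HA]]] Hl; rewrite (HA l Hl).
  apply (sum_pow_tensor_nonneg n), Hl; exact Hus.
Qed.

Lemma decomp_add (m n : nat) (A B : tensor) (us vs : list (nat -> R)) :
  Forall (nonneg_vec n) us -> decomp m n B vs ->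
  (forall l, valid_idx m n l -> A l = sum_pow_tensor us l + B l) ->
  decomp m n A (us ++ vs).
Proof.
  intros Hus [Hvs HB] HA; split; [apply Forall_app; split; assumption|].
  intros l Hl; rewrite HA, HB by assumption.
  symmetry; apply sum_pow_tensor_app.
Qed.

Lemma spans_Rn_app (n : nat) (us vs : list (nat -> R)) :
  spans_Rn n us -> spans_Rn n (us ++ vs).
Proof.
  intros Hus v; destruct (Hus v) as [c Hc].
  exists (fun k => if k <? length us then c k else 0); intros i Hi.
  rewrite Hc by assumption.
  rewrite length_app, seq_app, map_app, sumR_app.
  rewrite (sumR_map_zero _ (seq (0 + length us) (length vs))), Rplus_0_r.
  - f_equal; apply map_ext_in; intros k Hk; apply in_seq in Hk.
    case (Nat.ltb_spec k (length us)); [intros _ | lia].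
    rewrite app_nth1 by lia; reflexivity.
  - intros k Hk; apply in_seq in Hk.
    case (Nat.ltb_spec k (length us)); [lia | intros _; ring].
Qed.

Definition scaled_unit (c : R) (i : nat) : nat -> R :=
  fun j => if Nat.eqb i j then c else 0.

Definition scaled_units (c : R) (n : nat) : list (nat -> R) :=
  map (scaled_unit c) (seq 0 n).

Lemma scaled_units_nonneg (c : R) (n : nat) :
  0 <= c -> Forall (nonneg_vec n) (scaled_units c n).
Proof.
  intros Hc; apply Forall_forall; intros u Hu.
  apply in_map_iff in Hu as [i [<- _]].
  intros j _; unfold scaled_unit; destruct (Nat.eqb i j); lra.
Qed.

Lemma scaled_units_spans (c : R) (n : nat) :
  c <> 0 -> spans_Rn n (scaled_units c n).
Proof.
  intros Hc v; exists (fun k => v k / c); intros i Hi.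
  unfold scaled_units; rewrite length_map, length_seq.
  rewrite (map_ext_in _ (fun k => if Nat.eqb k i then v k else 0)).
  - rewrite sumR_delta.
    case (Nat.leb_spec 0 i); case (Nat.ltb_spec i (0 + n)); simpl;
      intros; [reflexivity | lia ..].
  - intros k Hk; apply in_seq in Hk.
    rewrite nth_indep with (d' := scaled_unit c 0) by (rewrite length_map, length_seq; lia).
    rewrite map_nth, seq_nth by lia; unfold scaled_unit; simpl.
    destruct (Nat.eqb k i); field; assumption.
Qed.

(* The entries of [sum_i (c e_i)^m] are [c^m] on the diagonal and [0] off it. *)
Lemma sum_pow_scaled_units_bound (c : R) (n : nat) (l : list nat) :
  0 <= c <= 1 -> Forall (fun i => (i < n)%nat) l -> l <> [] ->
  0 <= sum_pow_tensor (scaled_units c n) l <= c.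
Proof.
  intros Hc Hl Hne; split.
  { apply (sum_pow_tensor_nonneg n); [apply scaled_units_nonneg; lra | exact Hl]. }
  destruct l as [|j t]; [contradiction|].
  unfold sum_pow_tensor, scaled_units; rewrite map_map.
  apply Rle_trans with (sumR (map (fun k => if Nat.eqb k j then c else 0) (seq 0 n))).
  - apply sumR_map_le; intros k _; rewrite pow_tensor_cons.
    assert (Ht : 0 <= pow_tensor (scaled_unit c k) t <= 1).
    { apply pow_tensor_unit_interval; intros i; unfold scaled_unit;
        destruct (Nat.eqb k i); lra. }
    unfold scaled_unit at 1; destruct (Nat.eqb k j); nra.
  - rewrite (sumR_delta (fun _ => c)); destruct andb; lra.
Qed.

Lemma interior_CP_sub_small (m n : nat) (A : tensor) :
  interior_CP m n A -> exists eps, 0 < eps /\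
    forall D, symmetric_tensor m n D ->
      (forall l, valid_idx m n l -> 0 <= D l < eps) ->
      CP_tensor m n (fun l => A l - D l).
Proof.
  intros [HsA [eps [Heps Hint]]]; exists eps; split; [exact Heps|].
  intros D HsD HD; apply Hint; [apply symmetric_tensor_sub; assumption|].
  intros l Hl; destruct (HD l Hl).
  replace (A l - D l - A l) with (- D l) by ring.
  rewrite Rabs_Ropp, Rabs_right; lra.
Qed.

Lemma interior_CP_Nplus (m n : nat) (A : tensor) :
  interior_CP m n A -> Nplus_tensor m n A.
Proof.
  intros HA l Hl.
  destruct (interior_CP_sub_small m n A HA) as [eps [Heps Hsub]].
  assert (HCP : CP_tensor m n (fun l => A l - eps / 2)).
  { apply Hsub; [intros ? ? _ _; reflexivity | intros; lra]. }
  pose proof (CP_tensor_nonneg m n _ l HCP Hl); simpl in *; lra.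
Qed.

Lemma interior_CP_SCP (m n : nat) (A : tensor) :
  (1 <= m)%nat -> interior_CP m n A -> SCP_tensor m n A.
Proof.
  intros Hm HA; split; [apply HA|].
  destruct (interior_CP_sub_small m n A HA) as [eps [Heps Hsub]].
  set (c := Rmin (eps / 2) 1).
  assert (Hc : 0 < c <= 1 /\ c < eps).
  { unfold c; pose proof (Rmin_l (eps / 2) 1); pose proof (Rmin_r (eps / 2) 1).
    pose proof (Rmin_pos (eps / 2) 1); lra. }
  assert (HCP : CP_tensor m n (fun l => A l - sum_pow_tensor (scaled_units c n) l)).
  { apply Hsub; [apply sum_pow_tensor_symmetric|].
    intros l [Hlen Hl].
    assert (Hne : l <> []) by (intros ->; simpl in Hlen; lia).
    assert (Hb := sum_pow_scaled_units_bound c n l ltac:(lra) Hl Hne); lra. }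
  destruct HCP as [_ [us Hus]].
  exists (scaled_units c n ++ us); split.
  - apply (decomp_add _ _ _ _ _ _ (scaled_units_nonneg c n ltac:(lra)) Hus).
    intros l _; ring.
  - apply spans_Rn_app, scaled_units_spans; lra.
Qed.

Theorem mainTheorem13 (m n : nat) (hm : (2 <= m)%nat) (hn : (1 <= n)%nat)
  (A : tensor) (hA : interior_CP m n A) :
  SCP_tensor m n A /\ Nplus_tensor m n A.
Proof.
  split.
  - apply interior_CP_SCP; [lia | exact hA].
  - apply interior_CP_Nplus, hA.
Qed.
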